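(* $(\mathcal D,\sqsubseteq)$ is a complete lattice.
   Context: Let $\mathcal V$ be a countably infinite set of variables. $\mathcal M$ is the set of maps $m:\mathcal V\to\mathbb N\cup\{\infty\}$, ordered pointwise ($m_1\sqsubseteq m_2$ iff $m_1(x)\le m_2(x)$ for all $x$). $\mathcal P$ is the set of discrete probability distributions on $\mathcal M$. For a subdistribution $\pi$ on $\mathcal M$ with total mass $|\pi|$, its weighting $\overline\pi:\mathcal V\to\mathbb R_{\ge0}\cup\{\infty\}$ is $\overline\pi(x)=\frac1{|\pi|}\sum_m\pi(m)m(x)$ if $|\pi|>0$, and $\overline\pi(x)=0$ otherwise. For $p_1,p_2\in\mathcal P$: $p_1\sqsubseteq p_2$ iff there is a coupling $\omega$ of $p_1,p_2$ (distribution on $\mathcal M\times\mathcal M$ with marginals $p_1$ and $p_2$) such that for all $m\in\mathcal M$, $\overline{\omega(\cdot,m)}(x)\le m(x)$ for all $x$, where $\omega(\cdot,m)$ is the subdistribution $m'\mapsto\omega(m',m)$. For $P\subseteq\mathcal P$, $\downarrow P=\{p\in\mathcal P\mid p\sqsubseteq p'\text{ for some }p'\in P\}$. $\mathcal D=\{P\subseteq\mathcal P\mid P\ne\emptyset,\ \downarrow P=P\}$, ordered by $P_1\sqsubseteq P_2$ iff for every $p_1\in P_1$ there is $p_2\in P_2$ with $p_1\sqsubseteq p_2$. *)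

From Stdlib Require Import Reals List ClassicalEpsilon.
Import ListNotations.
Open Scope R_scope.

(** Extended non-negative reals [0, +oo] (only used with non-negative reals). *)
Inductive ER : Type := ERfin (r : R) | ERinf.

Definition ERle (a b : ER) : Prop :=
  match a, b with
  | _, ERinf => True
  | ERinf, ERfin _ => False
  | ERfin x, ERfin y => x <= y
  end.

Definition ERadd (a b : ER) : ER :=
  match a, b with
  | ERfin x, ERfin y => ERfin (x + y)
  | _, _ => ERinf
  end.

(** Multiplication with the measure-theoretic convention 0 * oo = 0. *)
Definition ERmul (a b : ER) : ER :=
  match a, b with
  | ERfin x, ERfin y => ERfin (x * y)
  | ERfin x, ERinf => if Req_EM_T x 0 then ERfin 0 else ERinf
  | ERinf, ERfin y => if Req_EM_T y 0 then ERfin 0 else ERinf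
  | ERinf, ERinf => ERinf
  end.

Definition ER_is_lub (S : ER -> Prop) (s : ER) : Prop :=
  (forall a, S a -> ERle a s) /\ (forall b, (forall a, S a -> ERle a b) -> ERle s b).

Definition ERsup (S : ER -> Prop) : ER :=
  epsilon (inhabits ERinf) (fun s => ER_is_lub S s).

Definition usum {A : Type} (f : A -> ER) : ER :=
  ERsup (fun s => exists l : list A, NoDup l /\
           s = fold_right (fun a acc => ERadd (f a) acc) (ERfin 0) l).

(** N ∪ {oo}: [None] is oo. *)
Definition Ninf := option nat.

Definition Ninf_le (a b : Ninf) : Prop :=
  match a, b with
  | _, None => True
  | None, Some _ => False
  | Some x, Some y => (x <= y)%nat
  end.

Definition Ninf_to_ER (a : Ninf) : ER :=
  match a with Some n => ERfin (INR n) | None => ERinf end.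

Definition Mmap (V : Type) := V -> Ninf.

Definition Mle {V : Type} (m1 m2 : Mmap V) : Prop :=
  forall x, Ninf_le (m1 x) (m2 x).

Definition is_dist {A : Type} (p : A -> R) : Prop :=
  (forall a, 0 <= p a) /\
  (exists e : nat -> A, forall a, p a <> 0 -> exists n, e n = a) /\
  usum (fun a => ERfin (p a)) = ERfin 1.

Definition weighting {V : Type} (pi : Mmap V -> R) (x : V) : ER :=
  match usum (fun m => ERfin (pi m)) with
  | ERfin t =>
      if Rlt_dec 0 t then
        ERmul (ERfin (/ t)) (usum (fun m => ERmul (ERfin (pi m)) (Ninf_to_ER (m x))))
      else ERfin 0
  | ERinf => ERfin 0
  end.

Definition is_coupling {V : Type} (w : Mmap V * Mmap V -> R) (p1 p2 : Mmap V -> R) : Prop :=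
  is_dist w /\
  (forall m1, usum (fun m2 => ERfin (w (m1, m2))) = ERfin (p1 m1)) /\
  (forall m2, usum (fun m1 => ERfin (w (m1, m2))) = ERfin (p2 m2)).

Definition Ple {V : Type} (p1 p2 : Mmap V -> R) : Prop :=
  exists w, is_coupling w p1 p2 /\
    forall (m : Mmap V) (x : V),
      ERle (weighting (fun m' => w (m', m)) x) (Ninf_to_ER (m x)).

Definition PSet (V : Type) := (Mmap V -> R) -> Prop.

Definition downset {V : Type} (P : PSet V) : PSet V :=
  fun p => is_dist p /\ exists p', P p' /\ Ple p p'.

Definition inD {V : Type} (P : PSet V) : Prop :=
  (forall p, P p -> is_dist p) /\
  (exists p, P p) /\
  (forall p, downset P p <-> P p).

Definition Dle {V : Type} (P1 P2 : PSet V) : Prop :=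
  forall p1, P1 p1 -> exists p2, P2 p2 /\ Ple p1 p2.

Definition Deq {V : Type} (P1 P2 : PSet V) : Prop := forall p, P1 p <-> P2 p.

Definition is_complete_lattice_D (V : Type) : Prop :=
  (forall P : PSet V, inD P -> Dle P P) /\
  (forall P1 P2 P3 : PSet V, inD P1 -> inD P2 -> inD P3 ->
     Dle P1 P2 -> Dle P2 P3 -> Dle P1 P3) /\
  (forall P1 P2 : PSet V, inD P1 -> inD P2 ->
     Dle P1 P2 -> Dle P2 P1 -> Deq P1 P2) /\
  (forall S : PSet V -> Prop, (forall P, S P -> inD P) ->
     exists U, inD U /\ (forall P, S P -> Dle P U) /\
       (forall U', inD U' -> (forall P, S P -> Dle P U') -> Dle U U')) /\
  (forall S : PSet V -> Prop, (forall P, S P -> inD P) ->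
     exists L, inD L /\ (forall P, S P -> Dle L P) /\
       (forall L', inD L' -> (forall P, S P -> Dle L' P) -> Dle L' L)).

From Stdlib Require Import Reals List ClassicalEpsilon Lra Classical FunctionalExtensionality FinFun.
Import ListNotations.
Local Open Scope R_scope.

(* The order on distributions is reflexive (diagonal coupling) and has the
   point mass at the zero map as least element (couple it with anything).
   Hence on D, [Dle] is plain inclusion, and D is closed under arbitrary
   intersections taken inside the set of distributions (the empty one being
   all of P, nonempty ones containing the least element).  Meets are these
   intersections and joins are meets of upper bounds. *)

Local Notation decide P := (excluded_middle_informative P).

Lemma ERle_refl a : ERle a a.
Proof. destruct a; simpl; auto; lra. Qed.

Lemma ERle_inf a : ERle a ERinf.
Proof. destruct a; exact I. Qed.

Lemma ERle_antisym a b : ERle a b -> ERle b a -> a = b.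
Proof. destruct a, b; simpl; intros; try contradiction; auto. f_equal; lra. Qed.

Lemma ERadd_0_l a : ERadd (ERfin 0) a = a.
Proof. destruct a; simpl; auto. f_equal; lra. Qed.

Lemma ERadd_0_r a : ERadd a (ERfin 0) = a.
Proof. destruct a; simpl; auto. f_equal; lra. Qed.

Lemma ERmul_0_l a : ERmul (ERfin 0) a = ERfin 0.
Proof. destruct a; simpl; [f_equal; lra|]. destruct (Req_EM_T 0 0); auto; lra. Qed.

Lemma ERmul_ge0 t a : 0 <= t -> ERle (ERfin 0) a -> ERle (ERfin 0) (ERmul (ERfin t) a).
Proof.
  destruct a as [r|]; simpl; intros Ht Ha; [nra|].
  destruct (Req_EM_T t 0); simpl; auto; lra.
Qed.

Lemma ERmul_invK t a : 0 < t -> ERmul (ERfin (/ t)) (ERmul (ERfin t) a) = a.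
Proof.
  intros Ht. destruct a as [r|]; simpl.
  - f_equal. field. lra.
  - destruct (Req_EM_T t 0); [lra|]. simpl.
    destruct (Req_EM_T (/ t) 0) as [Hi|]; auto.
    exfalso; apply (Rinv_neq_0_compat t); lra.
Qed.

Lemma ERle_Ninf_to_ER a b : Ninf_le a b -> ERle (Ninf_to_ER a) (Ninf_to_ER b).
Proof. destruct a, b; simpl; auto. apply le_INR. Qed.

Lemma Ninf_to_ER_ge0 a : ERle (ERfin 0) (Ninf_to_ER a).
Proof. destruct a; simpl; auto. apply pos_INR. Qed.

Lemma ER_is_lub_exists (S : ER -> Prop) : (exists a, S a) -> exists s, ER_is_lub S s.
Proof.
  intros [a0 Sa0].
  destruct (classic (S ERinf)) as [Sinf|Sinf].
  { exists ERinf; split; [intros; apply ERle_inf | intros b Hb; apply Hb, Sinf]. }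
  destruct (classic (exists M, forall r, S (ERfin r) -> r <= M)) as [[M HM]|Hunb].
  - destruct (completeness (fun r => S (ERfin r))) as [l [Hub Hleast]].
    + exists M; exact HM.
    + destruct a0 as [r|]; [exists r; exact Sa0 | contradiction].
    + exists (ERfin l); split.
      * intros [r|] Ha; [apply Hub, Ha | contradiction].
      * intros [y|] Hb; simpl; auto.
        apply Hleast; intros r Hr; apply (Hb _ Hr).
  - exists ERinf; split; [intros; apply ERle_inf|].
    intros [y|] Hb; [|exact I].
    exfalso; apply Hunb; exists y; intros r Hr; apply (Hb _ Hr).
Qed.

Definition lsum {A : Type} (f : A -> ER) (l : list A) : ER :=
  fold_right (fun a acc => ERadd (f a) acc) (ERfin 0) l.

Definition partial_sums {A : Type} (f : A -> ER) (s : ER) : Prop :=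
  exists l : list A, NoDup l /\ s = lsum f l.

Lemma usum_spec {A : Type} (f : A -> ER) : ER_is_lub (partial_sums f) (usum f).
Proof.
  unfold usum, ERsup. apply epsilon_spec, ER_is_lub_exists.
  exists (ERfin 0), []. split; [constructor | reflexivity].
Qed.

Lemma usum_eq {A : Type} (f : A -> ER) s : ER_is_lub (partial_sums f) s -> usum f = s.
Proof.
  intros [Hub Hleast]. destruct (usum_spec f) as [Uub Uleast].
  apply ERle_antisym; [apply Uleast, Hub | apply Hleast, Uub].
Qed.

Lemma lsum_zero {A : Type} (f : A -> ER) l :
  (forall a, In a l -> f a = ERfin 0) -> lsum f l = ERfin 0.
Proof.
  induction l as [|a l IH]; simpl; intros Hz; auto.
  rewrite Hz, IH, ERadd_0_l; auto.
Qed.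

Lemma lsum_single {A : Type} (f : A -> ER) a l :
  (forall b, b <> a -> f b = ERfin 0) -> NoDup l -> In a l -> lsum f l = f a.
Proof.
  intros Hz. induction l as [|b l IH]; simpl; intros Hl Ha; [contradiction|].
  inversion Hl as [|? ? Hb Hl']; subst.
  destruct Ha as [<-|Ha].
  - rewrite lsum_zero, ERadd_0_r; auto.
    intros c Hc; apply Hz; intros ->; contradiction.
  - rewrite Hz, ERadd_0_l; auto. intros ->; contradiction.
Qed.

Lemma usum_single {A : Type} (f : A -> ER) a :
  (forall b, b <> a -> f b = ERfin 0) -> ERle (ERfin 0) (f a) -> usum f = f a.
Proof.
  intros Hz Ha. apply usum_eq. split.
  - intros s [l [Hl ->]]. destruct (classic (In a l)) as [Hin|Hout].
    + rewrite (lsum_single f a); auto. apply ERle_refl.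
    + rewrite lsum_zero; auto. intros b Hb; apply Hz; intros ->; contradiction.
  - intros b Hb. apply Hb. exists [a]. split.
    + constructor; [intros [] | constructor].
    + simpl. rewrite ERadd_0_r. reflexivity.
Qed.

Lemma lsum_map {A B : Type} (h : B -> A) (f : A -> ER) l :
  lsum f (map h l) = lsum (fun b => f (h b)) l.
Proof. induction l as [|b l IH]; simpl; congruence. Qed.

Lemma lsum_pullback {A B : Type} (h : B -> A) (f : A -> ER) l :
  Injective h -> (forall a, (forall b, h b <> a) -> f a = ERfin 0) -> NoDup l ->
  exists lb, NoDup lb /\ (forall b, In b lb -> In (h b) l) /\
             lsum (fun b => f (h b)) lb = lsum f l.
Proof.
  intros Hinj Hout. induction l as [|a l IH]; intros Hl.
  { exists []. split; [constructor | split; [intros _ [] | reflexivity]]. }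
  inversion Hl as [|? ? Ha Hl']; subst.
  destruct (IH Hl') as [lb [Hlb [Hin Hsum]]].
  destruct (classic (exists b, h b = a)) as [[b <-]|Hnot].
  - exists (b :: lb). split; [|split].
    + constructor; [intros Hb; apply Ha, Hin, Hb | exact Hlb].
    + intros c [<-|Hc]; [left | right; apply Hin]; auto.
    + simpl. rewrite Hsum. reflexivity.
  - exists lb. split; [exact Hlb | split].
    + intros c Hc; right; apply Hin, Hc.
    + simpl. rewrite Hout, ERadd_0_l; auto.
      intros b Hb; apply Hnot; exists b; exact Hb.
Qed.

Lemma usum_reindex {A B : Type} (h : B -> A) (f : A -> ER) :
  Injective h -> (forall a, (forall b, h b <> a) -> f a = ERfin 0) ->
  usum f = usum (fun b => f (h b)).
Proof.
  intros Hinj Hout. apply usum_eq.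
  destruct (usum_spec (fun b => f (h b))) as [Hub Hleast]. split.
  - intros s [l [Hl ->]].
    destruct (lsum_pullback h f l Hinj Hout Hl) as [lb [Hlb [_ <-]]].
    apply Hub. exists lb; auto.
  - intros u Hu. apply Hleast. intros s [l [Hl ->]].
    rewrite <- lsum_map. apply Hu. exists (map h l).
    split; [apply Injective_map_NoDup|]; auto.
Qed.

Section GraphCoupling.
Context {V : Type} (j : Mmap V -> Mmap V) (p : Mmap V -> R).
Hypothesis p_dist : is_dist p.

Definition graph_coupling (q : Mmap V * Mmap V) : R :=
  if decide (fst q = j (snd q)) then p (snd q) else 0.

Lemma graph_coupling_ge0 q : 0 <= graph_coupling q.
Proof.
  destruct p_dist as [p_ge0 _]. unfold graph_coupling.
  destruct (decide _); auto; lra.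
Qed.

Lemma graph_coupling_dist : is_dist graph_coupling.
Proof.
  destruct p_dist as [p_ge0 [[e He] p_mass]].
  split; [|split].
  - exact graph_coupling_ge0.
  - exists (fun n => (j (e n), e n)). intros [m1 m2]. unfold graph_coupling; simpl.
    destruct (decide (m1 = j m2)) as [->|]; [|tauto].
    intros Hm2. destruct (He m2 Hm2) as [n <-]. exists n; reflexivity.
  - rewrite (usum_reindex (fun m => (j m, m))).
    + rewrite <- p_mass. f_equal. apply functional_extensionality; intros m.
      unfold graph_coupling; simpl. destruct (decide (j m = j m)); congruence.
    + intros m m' Hm; injection Hm; auto.
    + intros [m1 m2] Hout. unfold graph_coupling; simpl.
      destruct (decide (m1 = j m2)) as [->|]; auto.
      exfalso; apply (Hout m2); reflexivity.
Qed.

Lemma graph_coupling_column (F : Mmap V -> ER) m :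
  ERle (ERfin 0) (F (j m)) ->
  usum (fun m' => ERmul (ERfin (graph_coupling (m', m))) (F m'))
  = ERmul (ERfin (p m)) (F (j m)).
Proof.
  intros HF. rewrite (usum_single _ (j m)).
  - unfold graph_coupling; simpl. destruct (decide (j m = j m)); congruence.
  - intros m' Hm'. unfold graph_coupling; simpl.
    destruct (decide (m' = j m)); [contradiction | apply ERmul_0_l].
  - apply ERmul_ge0; [apply graph_coupling_ge0 | exact HF].
Qed.

Lemma graph_coupling_marginal2 m :
  usum (fun m' => ERfin (graph_coupling (m', m))) = ERfin (p m).
Proof.
  transitivity (usum (fun m' => ERmul (ERfin (graph_coupling (m', m))) (ERfin 1))).
  - f_equal. apply functional_extensionality; intros m'. simpl. f_equal; ring.
  - rewrite graph_coupling_column; simpl; [f_equal; ring | lra].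
Qed.

Hypothesis j_below : forall m, Mle (j m) m.

(* Column [m] of the graph coupling is the point mass at [j m], so its
   weighting is [j m] itself. *)
Lemma graph_coupling_Ple (p1 : Mmap V -> R) :
  (forall m1, usum (fun m2 => ERfin (graph_coupling (m1, m2))) = ERfin (p1 m1)) ->
  Ple p1 p.
Proof.
  intros marginal1. exists graph_coupling. split.
  { split; [exact graph_coupling_dist | split; [exact marginal1 | exact graph_coupling_marginal2]]. }
  intros m x. unfold weighting. rewrite graph_coupling_marginal2.
  destruct (Rlt_dec 0 (p m)) as [Hpos|]; [|apply Ninf_to_ER_ge0].
  rewrite (graph_coupling_column (fun m' => Ninf_to_ER (m' x))), ERmul_invK by
    (auto using Ninf_to_ER_ge0).
  apply ERle_Ninf_to_ER, j_below.
Qed.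

End GraphCoupling.

Section LeastDistribution.
Context {V : Type}.

Lemma Ple_refl (p : Mmap V -> R) : is_dist p -> Ple p p.
Proof.
  intros Hp. apply (graph_coupling_Ple (fun m => m)); auto.
  - intros m x. destruct (m x); simpl; [apply Nat.le_refl | exact I].
  - intros m1. rewrite (usum_single _ m1); unfold graph_coupling; simpl.
    + destruct (decide (m1 = m1)); congruence.
    + intros m2 Hm2. destruct (decide (m1 = m2)); congruence.
    + destruct (decide (m1 = m1)); simpl; [apply (proj1 Hp) | lra].
Qed.

Definition zero_map : Mmap V := fun _ => Some 0%nat.

Definition dirac_zero (m : Mmap V) : R := if decide (m = zero_map) then 1 else 0.

Lemma dirac_zero_dist : is_dist dirac_zero.
Proof.
  split; [|split].
  - intros m; unfold dirac_zero; destruct (decide _); lra.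
  - exists (fun _ => zero_map). intros m. unfold dirac_zero.
    destruct (decide (m = zero_map)); [|tauto]. intros _; exists 0%nat; auto.
  - rewrite (usum_single _ zero_map); unfold dirac_zero.
    + destruct (decide (zero_map = zero_map)); congruence.
    + intros m Hm; destruct (decide (m = zero_map)); congruence.
    + destruct (decide (zero_map = zero_map)); simpl; lra.
Qed.

Lemma dirac_zero_Ple (p : Mmap V -> R) : is_dist p -> Ple dirac_zero p.
Proof.
  intros Hp. apply (graph_coupling_Ple (fun _ => zero_map)); auto.
  - intros m x. destruct (m x); simpl; [apply Nat.le_0_l | exact I].
  - intros m1. unfold dirac_zero, graph_coupling; simpl.
    destruct (decide (m1 = zero_map)) as [->|Hm1].
    + exact (proj2 (proj2 Hp)).
    + rewrite (usum_single _ m1); [reflexivity | reflexivity | apply ERle_refl].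
Qed.

End LeastDistribution.

Section DownsetLattice.
Context {V : Type}.

Lemma inD_intro (P : PSet V) :
  (forall p, P p -> is_dist p) -> (exists p, P p) ->
  (forall p p', is_dist p -> Ple p p' -> P p' -> P p) -> inD P.
Proof.
  intros Hdist Hne Hdown. split; [exact Hdist | split; [exact Hne|]].
  intros p; split.
  - intros [Hp [p' [HPp' Hle]]]. exact (Hdown p p' Hp Hle HPp').
  - intros HPp. split; [apply Hdist, HPp|]. exists p; split; auto.
    apply Ple_refl, Hdist, HPp.
Qed.

Lemma inD_down (P : PSet V) p p' : inD P -> is_dist p -> Ple p p' -> P p' -> P p.
Proof.
  intros [_ [_ Hdown]] Hp Hle HPp'. apply Hdown. split; [exact Hp|]. exists p'; auto.
Qed.

Lemma inD_dirac_zero (P : PSet V) : inD P -> P dirac_zero.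
Proof.
  intros HP. destruct (proj1 (proj2 HP)) as [p HPp].
  apply (inD_down P dirac_zero p HP dirac_zero_dist); [|exact HPp].
  apply dirac_zero_Ple, (proj1 HP), HPp.
Qed.

Lemma Dle_incl (P1 P2 : PSet V) : inD P1 -> inD P2 -> Dle P1 P2 -> forall p, P1 p -> P2 p.
Proof.
  intros HP1 HP2 Hle p HPp. destruct (Hle p HPp) as [p2 [HP2p2 Hp]].
  apply (inD_down P2 p p2); auto. apply (proj1 HP1), HPp.
Qed.

Lemma incl_Dle (P1 P2 : PSet V) : inD P2 -> (forall p, P1 p -> P2 p) -> Dle P1 P2.
Proof.
  intros HP2 Hincl p HPp. exists p. split; [apply Hincl, HPp|].
  apply Ple_refl, (proj1 HP2), Hincl, HPp.
Qed.

Definition Dmeet (S : PSet V -> Prop) : PSet V :=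
  fun p => is_dist p /\ forall P, S P -> P p.

Variable S : PSet V -> Prop.
Hypothesis S_inD : forall P, S P -> inD P.

Lemma Dmeet_inD : inD (Dmeet S).
Proof.
  apply inD_intro.
  - intros p [Hp _]; exact Hp.
  - exists dirac_zero. split; [exact dirac_zero_dist|].
    intros P HP. apply inD_dirac_zero, S_inD, HP.
  - intros p p' Hp Hle [_ Hp']. split; [exact Hp|].
    intros P HP. apply (inD_down P p p'); auto.
    apply Hp', HP.
Qed.

Lemma Dmeet_lb P : S P -> Dle (Dmeet S) P.
Proof. intros HP. apply incl_Dle; [apply S_inD, HP|]. intros p [_ Hp]; apply Hp, HP. Qed.

Lemma Dmeet_glb L : inD L -> (forall P, S P -> Dle L P) -> Dle L (Dmeet S).
Proof.
  intros HL Hlb. apply incl_Dle; [exact Dmeet_inD|].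
  intros p HLp. split; [apply (proj1 HL), HLp|].
  intros P HP. apply (Dle_incl L P); auto.
Qed.

End DownsetLattice.

Theorem proposition4 (V : Type)
  (HV : exists (f : V -> nat) (g : nat -> V),
          (forall v, g (f v) = v) /\ (forall n, f (g n) = n)) :
  is_complete_lattice_D V.
Proof.
  clear HV. split; [|split; [|split; [|split]]].
  - intros P HP. apply incl_Dle; auto.
  - intros P1 P2 P3 H1 H2 H3 H12 H23. apply incl_Dle; auto.
    intros p Hp. apply (Dle_incl P2 P3), (Dle_incl P1 P2); auto.
  - intros P1 P2 H1 H2 H12 H21 p. split; [apply (Dle_incl P1 P2) | apply (Dle_incl P2 P1)]; auto.
  - intros S HS. set (Ub := fun Q => inD Q /\ forall P, S P -> Dle P Q).
    assert (Ub_inD : forall Q, Ub Q -> inD Q) by (intros Q [HQ _]; exact HQ).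
    exists (Dmeet Ub). split; [apply Dmeet_inD, Ub_inD | split].
    + intros P HP. apply (Dmeet_glb Ub Ub_inD P (HS P HP)).
      intros Q [HQ Hub]. apply Hub, HP.
    + intros U HU Hub. apply Dmeet_lb; [exact Ub_inD | split; auto].
  - intros S HS. exists (Dmeet S).
    split; [apply Dmeet_inD, HS | split; [apply Dmeet_lb, HS | apply Dmeet_glb, HS]].
Qed.
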